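(* Let $b_1,b_2,b_3$ be functions on an open interval $I$ and let $\gamma: I\to\mathbb{E}^4$ be a regular curve with a Bishop frame $\mathbb{B}$ whose coefficient matrix is $X_{\mathbb{B}}=\begin{pmatrix}0&b_1&b_2&b_3\\-b_1&0&0&0\\-b_2&0&0&0\\-b_3&0&0&0\end{pmatrix}$. Suppose the vector ${}^t(b_1,b_2,b_3)$ is nowhere parallel to ${}^t(0,1,0)$ (equivalently, $(b_1,b_3)$ is nowhere zero). Then $\gamma$ admits a frame $\mathbb{C}$ whose coefficient matrix is $X_{\mathbb{C}}=\begin{pmatrix}0&c_1&c_2&0\\-c_1&0&0&c_3\\-c_2&0&0&0\\0&-c_3&0&0\end{pmatrix}$ with $c_1=\pm\sqrt{b_1^2+b_3^2}$, $c_2=b_2$, $c_3=\pm\dfrac{b_3'b_1-b_3b_1'}{b_1^2+b_3^2}$ (for suitable choices of signs), and the transformation $G=\mathbb{C}\mathbb{B}^{-1}$ is of the form $\begin{pmatrix}1&0&0&0\\0&\pm\cos\theta&0&\pm\sin\theta\\0&0&1&0\\0&-\sin\theta&0&\cos\theta\end{pmatrix}$ for some function $\theta$ with $\theta'=\pm\dfrac{b_3'b_1-b_3b_1'}{b_1^2+b_3^2}$.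
   Context: A regular curve $\gamma: I\to\mathbb{E}^4$ is considered with arc-length parametrization; $\mathbb{T}=\gamma'$ is its unit tangent vector. A frame on $\gamma$ is an ordered orthonormal frame $(\mathbb{T},\mathbb{Z}_1,\mathbb{Z}_2,\mathbb{Z}_3)$ of smooth vector fields along $\gamma$ whose first vector is $\mathbb{T}$; it is identified with the smooth map $\mathbb{Z}: I\to O(4)$ whose rows are these vectors. Its coefficient matrix is the $\mathfrak{o}(4)$-valued function $X$ with $\mathbb{Z}'=X\mathbb{Z}$. A Bishop frame is a frame whose coefficient matrix has the form $\begin{pmatrix}0&b_1&b_2&b_3\\-b_1&0&0&0\\-b_2&0&0&0\\-b_3&0&0&0\end{pmatrix}$. *)

From HB Require Import structures.
From mathcomp Require Import all_boot all_order all_algebra.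
From mathcomp Require Import all_classical all_reals all_analysis.
Set Implicit Arguments. Unset Strict Implicit. Unset Printing Implicit Defensive.
Import Order.TTheory GRing.Theory Num.Theory.
Import numFieldNormedType.Exports.
Local Open Scope ring_scope.
Local Open Scope classical_set_scope.

Section Defs.
Variable R : realType.

Definition smooth_on (I : set R) (f : R -> R) : Prop :=
  forall (n : nat) (t : R), I t -> derivable (derive1n n f) t 1.

Definition curve_smooth (I : set R) (g : R -> 'rV[R]_4) : Prop :=
  forall j : 'I_4, smooth_on I (fun t => g t ord0 j).

Definition velocity (g : R -> 'rV[R]_4) (t : R) : 'rV[R]_4 :=
  \row_(j < 4) derive1 (fun s => g s ord0 j) t.

Definition arclength_param (I : set R) (g : R -> 'rV[R]_4) : Prop :=
  forall t, I t -> velocity g t *m (velocity g t)^T = 1%:M.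

Definition is_frame (I : set R) (g : R -> 'rV[R]_4) (Z : R -> 'M[R]_4) : Prop :=
  (forall i j : 'I_4, smooth_on I (fun t => Z t i j)) /\
  (forall t, I t -> Z t *m (Z t)^T = 1%:M /\ row ord0 (Z t) = velocity g t).

Definition coeff_mx (I : set R) (Z X : R -> 'M[R]_4) : Prop :=
  forall t, I t -> forall i j : 'I_4,
    derivable (fun s => Z s i j) t 1 /\
    derive1 (fun s => Z s i j) t = (X t *m Z t) i j.

Definition bishop_mx (b1 b2 b3 : R) : 'M[R]_4 :=
  \matrix_(i < 4, j < 4)
    match nat_of_ord i, nat_of_ord j with
    | 0, 1 => b1 | 0, 2 => b2 | 0, 3 => b3
    | 1, 0 => - b1 | 2, 0 => - b2 | 3, 0 => - b3
    | _, _ => 0 end.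

Definition cframe_mx (c1 c2 c3 : R) : 'M[R]_4 :=
  \matrix_(i < 4, j < 4)
    match nat_of_ord i, nat_of_ord j with
    | 0, 1 => c1 | 0, 2 => c2
    | 1, 0 => - c1 | 1, 3 => c3
    | 2, 0 => - c2
    | 3, 1 => - c3
    | _, _ => 0 end.

Definition G_mx (e1 e2 th : R) : 'M[R]_4 :=
  \matrix_(i < 4, j < 4)
    match nat_of_ord i, nat_of_ord j with
    | 0, 0 => 1
    | 1, 1 => e1 * cos th | 1, 3 => e2 * sin th
    | 2, 2 => 1
    | 3, 1 => - sin th | 3, 3 => cos th
    | _, _ => 0 end.

Definition is_sign (e : R) : Prop := e = 1 \/ e = -1.

End Defs.

From HB Require Import structures.
From mathcomp Require Import all_boot all_order all_algebra.
From mathcomp Require Import all_classical all_reals all_analysis.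
From mathcomp Require Import ring lra.
Import Order.TTheory GRing.Theory Num.Theory.
Import numFieldNormedType.Exports.
Local Open Scope ring_scope.
Local Open Scope classical_set_scope.

(* Write (b1, b3) = rho (cos th, sin th) with rho = sqrt (b1^2 + b3^2) > 0
   and a smooth angle th.  Such an angle is a suitable constant plus a
   primitive of w = (b3' b1 - b3 b1') / rho^2 = u v' - v u', where
   (u, v) = (b1, b3) / rho: the function u cos th + v sin th then has zero
   derivative, so it stays 1, which forces (cos th, sin th) = (u, v).
   Rotating the normals B1, B3 of the Bishop frame by th gives C = G B, whose
   coefficient matrix (G' + G X_B) G^T is X_C with c1 = rho, c2 = b2,
   c3 = w (all signs +).  Smoothness of C reduces to that of th, hence of w;
   the b_i are smooth because X_B = B' B^T. *)

Section RealDerivatives.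
Context {R : realType}.
Implicit Types (f g : R -> R) (t : R).

Lemma is_derive1P f t d : is_derive t 1 f d <-> derivable f t 1 /\ f^`() t = d.
Proof. by rewrite derive1E; split=> [[]|[]]; [|exact: DeriveDef]. Qed.

Lemma is_derive1D {f g t df dg} : is_derive t 1 f df -> is_derive t 1 g dg ->
  is_derive t 1 (fun s => f s + g s) (df + dg).
Proof. exact: is_deriveD. Qed.

Lemma is_derive1N {f t df} : is_derive t 1 f df ->
  is_derive t 1 (fun s => - f s) (- df).
Proof. exact: is_deriveN. Qed.

Lemma is_derive1M {f g t df dg} : is_derive t 1 f df -> is_derive t 1 g dg ->
  is_derive t 1 (fun s => f s * g s) (df * g t + f t * dg).
Proof.
move=> fdf gdg; apply: is_derive_eq (is_deriveM fdf gdg) _.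
by rewrite /GRing.scale /= addrC mulrC.
Qed.

Lemma is_derive1V {f t df} : f t != 0 -> is_derive t 1 f df ->
  is_derive t 1 (fun s => (f s)^-1) (- (df / f t ^+ 2)).
Proof.
move=> ft0 fdf; apply: is_derive_eq (is_deriveV ft0 fdf) _.
by rewrite /GRing.scale /= mulrC mulrN.
Qed.

Lemma is_derive1_cos {f t df} : is_derive t 1 f df ->
  is_derive t 1 (fun s => cos (f s)) (- (sin (f t) * df)).
Proof.
move=> fdf; apply: is_derive_eq (is_derive1_comp (is_derive_cos _) fdf) _.
exact: mulNr.
Qed.

Lemma is_derive1_sin {f t df} : is_derive t 1 f df ->
  is_derive t 1 (fun s => sin (f s)) (cos (f t) * df).
Proof. by move=> fdf; exact: (is_derive1_comp (is_derive_sin _) fdf). Qed.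

Lemma is_derive1_sum {n} {F : 'I_n -> R -> R} {t} {dF : 'I_n -> R} :
  (forall k, is_derive t 1 (F k) (dF k)) ->
  is_derive t 1 (fun s => \sum_(k < n) F k s) (\sum_(k < n) dF k).
Proof.
by move=> FdF; rewrite -fct_sumE; exact: is_derive_sum.
Qed.

Lemma is_derive1_unique {f t d1 d2} :
  is_derive t 1 f d1 -> is_derive t 1 f d2 -> d1 = d2.
Proof. by move=> [_ <-] [_ <-]. Qed.

Lemma is_derive1_derive {f t} : derivable f t 1 -> is_derive t 1 f (f^`() t).
Proof. by move=> df; apply/is_derive1P. Qed.

End RealDerivatives.

Section SmoothOn.
Context {R : realType} {I : set R}.
Hypothesis oI : open I.
Implicit Types (f g : R -> R) (n : nat).

Lemma derive1n_eq_on n {f g} : (forall t, I t -> f t = g t) ->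
  forall t, I t -> f^`(n) t = g^`(n) t.
Proof.
elim: n => [//|n IH] fg t It; rewrite !derive1nS !derive1E.
apply: near_eq_derive; near=> s; apply: (IH fg s).
by near: s; exact: open_nbhs_nbhs.
Unshelve. all: by end_near. Qed.

Definition derivable_upto n f :=
  forall m, (m <= n)%N -> forall t, I t -> derivable f^`(m) t 1.

Lemma smooth_onE f : smooth_on I f <-> forall n, derivable_upto n f.
Proof.
split=> [sf n m _ t It|sf]; first exact: sf.
move=> n t It; exact: (sf n n (leqnn n) t It).
Qed.

Lemma derivable_upto0 f :
  derivable_upto 0 f <-> forall t, I t -> derivable f t 1.
Proof. by split=> [f0|f0 [|//] _]; [exact: f0 0%N isT|exact: f0]. Qed.

Lemma derivable_upto_leq {m n f} :
  (m <= n)%N -> derivable_upto n f -> derivable_upto m f.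
Proof. by move=> mn fn k km; apply: fn (leq_trans km mn). Qed.

Lemma derivable_upto_derive1 {n f} :
  derivable_upto n.+1 f -> derivable_upto n f^`().
Proof. by move=> fn m mn; rewrite -derive1Sn; exact: fn. Qed.

Lemma derivable_upto_is_derive {n f t} :
  derivable_upto n f -> I t -> is_derive t 1 f (f^`() t).
Proof. by move=> fn It; exact: is_derive1_derive (fn 0%N isT t It). Qed.

Lemma derivable_upto_eq_on {n f g} : (forall t, I t -> f t = g t) ->
  derivable_upto n f -> derivable_upto n g.
Proof.
move=> fg fn m mn t It; apply: near_eq_derivable (fn m mn t It).
near=> s; apply: (derive1n_eq_on m fg).
by near: s; exact: open_nbhs_nbhs.
Unshelve. all: by end_near. Qed.

Lemma derivable_uptoS {n f} df : (forall t, I t -> is_derive t 1 f (df t)) ->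
  derivable_upto n df -> derivable_upto n.+1 f.
Proof.
move=> fdf dfn [_ t It|m mn]; first by have [] := fdf t It.
rewrite derive1Sn; apply: derivable_upto_eq_on dfn m mn => t It.
by case/is_derive1P: (fdf t It) => _ ->.
Qed.

Lemma derivable_upto_cst n (k : R) : derivable_upto n (fun=> k).
Proof.
elim: n k => [|n IH] k; first by apply/derivable_upto0 => t _; exact: derivable_cst.
by apply: (derivable_uptoS (fun=> 0)) (IH 0) => t _; exact: is_derive_cst.
Qed.

Lemma derivable_uptoD {n f g} : derivable_upto n f -> derivable_upto n g ->
  derivable_upto n (fun t => f t + g t).
Proof.
elim: n f g => [|n IH] f g fn gn.
  apply/derivable_upto0 => t It.
  by apply: derivableD; [exact: fn 0%N isT t It|exact: gn 0%N isT t It].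
apply: (derivable_uptoS (fun t => derive1 f t + derive1 g t)).
  move=> t It; apply: is_derive1D; first exact: derivable_upto_is_derive fn It.
  exact: derivable_upto_is_derive gn It.
by apply: IH; exact: derivable_upto_derive1.
Qed.

Lemma derivable_uptoM {n f g} : derivable_upto n f -> derivable_upto n g ->
  derivable_upto n (fun t => f t * g t).
Proof.
elim: n f g => [|n IH] f g fn gn.
  apply/derivable_upto0 => t It.
  by apply: derivableM; [exact: fn 0%N isT t It|exact: gn 0%N isT t It].
apply: (derivable_uptoS (fun t => derive1 f t * g t + f t * derive1 g t)).
  move=> t It; apply: is_derive1M; first exact: derivable_upto_is_derive fn It.
  exact: derivable_upto_is_derive gn It.
have f'n := derivable_upto_derive1 fn; have g'n := derivable_upto_derive1 gn.
have f_n := derivable_upto_leq (leqnSn n) fn.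
have g_n := derivable_upto_leq (leqnSn n) gn.
by apply: derivable_uptoD; apply: IH.
Qed.

Lemma derivable_uptoN {n f} : derivable_upto n f ->
  derivable_upto n (fun t => - f t).
Proof.
move=> fn; have := derivable_uptoM (derivable_upto_cst n (-1)) fn.
by apply: derivable_upto_eq_on => t _; rewrite mulN1r.
Qed.

Lemma derivable_uptoV {n f} : (forall t, I t -> f t != 0) ->
  derivable_upto n f -> derivable_upto n (fun t => (f t)^-1).
Proof.
move=> f0; elim: n f f0 => [|n IH] f f0 fn.
  apply/derivable_upto0 => t It.
  by apply: derivableV; [exact: f0|exact: fn 0%N isT t It].
apply: (derivable_uptoS (fun t => - (derive1 f t / f t ^+ 2))).
  by move=> t It; apply: is_derive1V (f0 t It) (derivable_upto_is_derive fn It).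
apply/derivable_uptoN/derivable_uptoM; first exact: derivable_upto_derive1.
have f2n : derivable_upto n (fun t => f t * f t).
  by apply: derivable_uptoM; exact: derivable_upto_leq fn.
by apply: IH f2n => t It; rewrite mulf_neq0 ?f0.
Qed.

Lemma derivable_upto_cos_sin {n f} : derivable_upto n f ->
  derivable_upto n (fun t => cos (f t)) /\ derivable_upto n (fun t => sin (f t)).
Proof.
elim: n f => [|n IH] f fn.
  split; apply/derivable_upto0 => t It; have fdf := derivable_upto_is_derive fn It.
    by case: (is_derive1_cos fdf).
  by case: (is_derive1_sin fdf).
have [cn sn] := IH f (derivable_upto_leq (leqnSn n) fn).
have f'n := derivable_upto_derive1 fn.
split.
  apply: (derivable_uptoS (fun t => - (sin (f t) * derive1 f t))).
    by move=> t It; apply: is_derive1_cos (derivable_upto_is_derive fn It).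
  exact/derivable_uptoN/derivable_uptoM.
apply: (derivable_uptoS (fun t => cos (f t) * derive1 f t)).
  by move=> t It; apply: is_derive1_sin (derivable_upto_is_derive fn It).
exact: derivable_uptoM.
Qed.

Lemma smooth_on_eq_on {f g} : (forall t, I t -> f t = g t) ->
  smooth_on I f -> smooth_on I g.
Proof.
move=> fg /smooth_onE fn; apply/smooth_onE => n.
exact: derivable_upto_eq_on fg (fn n).
Qed.

Lemma smooth_on_derivable {f t} : smooth_on I f -> I t -> derivable f t 1.
Proof. by move=> sf; exact: sf 0%N t. Qed.

Lemma smooth_on_derive1 {f} : smooth_on I f -> smooth_on I f^`().
Proof. by move=> sf n t It; rewrite -derive1Sn; exact: sf. Qed.

Lemma smooth_on_is_derive {f df} : (forall t, I t -> is_derive t 1 f (df t)) ->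
  smooth_on I df -> smooth_on I f.
Proof.
move=> fdf /smooth_onE dfn; apply/smooth_onE => n.
exact: derivable_upto_leq (leqnSn n) (derivable_uptoS df fdf (dfn n)).
Qed.

Lemma smooth_on_cst (k : R) : smooth_on I (fun=> k).
Proof. by apply/smooth_onE => n; exact: derivable_upto_cst. Qed.

Lemma smooth_onD {f g} : smooth_on I f -> smooth_on I g ->
  smooth_on I (fun t => f t + g t).
Proof.
move=> /smooth_onE fn /smooth_onE gn; apply/smooth_onE => n.
exact: derivable_uptoD.
Qed.

Lemma smooth_onN {f} : smooth_on I f -> smooth_on I (fun t => - f t).
Proof. by move=> /smooth_onE fn; apply/smooth_onE => n; exact: derivable_uptoN. Qed.

Lemma smooth_onM {f g} : smooth_on I f -> smooth_on I g ->
  smooth_on I (fun t => f t * g t).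
Proof.
move=> /smooth_onE fn /smooth_onE gn; apply/smooth_onE => n.
exact: derivable_uptoM.
Qed.

Lemma smooth_onV {f} : (forall t, I t -> f t != 0) -> smooth_on I f ->
  smooth_on I (fun t => (f t)^-1).
Proof.
by move=> f0 /smooth_onE fn; apply/smooth_onE => n; exact: derivable_uptoV.
Qed.

Lemma smooth_on_cos {f} : smooth_on I f -> smooth_on I (fun t => cos (f t)).
Proof.
move=> /smooth_onE fn; apply/smooth_onE => n.
by case: (derivable_upto_cos_sin (fn n)).
Qed.

Lemma smooth_on_sin {f} : smooth_on I f -> smooth_on I (fun t => sin (f t)).
Proof.
move=> /smooth_onE fn; apply/smooth_onE => n.
by case: (derivable_upto_cos_sin (fn n)).
Qed.

Lemma smooth_on_sum {n} {F : 'I_n -> R -> R} : (forall k, smooth_on I (F k)) ->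
  smooth_on I (fun t => \sum_(k < n) F k t).
Proof.
elim: n F => [|n IH] F sF.
  by apply: smooth_on_eq_on (smooth_on_cst 0) => t _; rewrite big_ord0.
have := smooth_onD (IH _ (fun k => sF (widen_ord (leqnSn n) k))) (sF ord_max).
by apply: smooth_on_eq_on => t _; rewrite big_ord_recr.
Qed.

End SmoothOn.

Section IntervalCalculus.
Context {R : realType}.
Implicit Types (I J : set R) (f w : R -> R).

Lemma is_derive_eq0_cst_on {J f} : is_interval J ->
  (forall x, J x -> is_derive x 1 f 0) -> forall x y, J x -> J y -> f x = f y.
Proof.
move=> iJ f0 x y Jx Jy.
wlog xy : x y Jx Jy / x <= y.
  by move=> H; case: (leP x y) => [|/ltW] xy; [exact: H|exact/esym/H].
have Jxy z : z \in `[x, y]%R -> J z.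
  by rewrite in_itv /= => /(iJ x y Jx Jy).
have [|z _] := MVT_segment xy (fun z zxy => f0 z (Jxy z (subset_itv_oo_cc zxy))).
  by apply: derivable_within_continuous => z /Jxy /f0[].
by rewrite mul0r => /eqP; rewrite subr_eq0 => /eqP.
Qed.

Lemma open_exists_lt {I t} : open I -> I t -> exists2 a, I a & a < t.
Proof.
move=> oI It; near (t^'-) => a; exists a.
  by near: a; apply: cvg_within; exact: open_nbhs_nbhs.
by near: a; exact: nbhs_left_lt.
Unshelve. all: by end_near. Qed.

Lemma open_exists_gt {I t} : open I -> I t -> exists2 a, I a & t < a.
Proof.
move=> oI It; near (t^'+) => a; exists a.
  by near: a; apply: cvg_within; exact: open_nbhs_nbhs.
by near: a; exact: nbhs_right_gt.
Unshelve. all: by end_near. Qed.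

Section Primitive.
Context {I : set R} {w : R -> R} (oI : open I) (iI : is_interval I).
Hypothesis wc : forall t, I t -> {for t, continuous w}.

Let F a x := parameterized_integral lebesgue_measure a x w.

Lemma is_derive_parameterized_integral {a x} : I a -> I x -> a < x ->
  is_derive x 1 (F a) (w x).
Proof.
move=> Ia Ix ax; have [u Iu xu] := open_exists_gt oI Ix.
have wi : lebesgue_measure.-integrable `[a, u] (EFin \o w).
  apply: continuous_compact_integrable; first exact: segment_compact.
  apply/continuous_in_subspaceT => z /[1!inE] /= /[1!in_itv] /= azu.
  exact/wc/(iI a u Ia Iu).
by apply/is_derive1P; exact: (@continuous_FTC1_closed R w a x u xu wi ax (wc x Ix)).
Qed.

Lemma parameterized_integralB_indep {a a' t c} : I a -> I a' -> I t -> I c ->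
  a < t -> a < c -> a' < t -> a' < c -> F a t - F a c = F a' t - F a' c.
Proof.
move=> Ia Ia' It Ic at_ ac a't a'c.
pose J := [set s | I s /\ a < s /\ a' < s].
have iJ : is_interval J.
  move=> x y [Ix [ax a'x]] [Iy _] z /andP[xz zy].
  split; first by apply: (iI x y Ix Iy); rewrite xz zy.
  by split; apply: lt_le_trans xz.
have dJ x : J x -> is_derive x 1 (fun s => F a s - F a' s) 0.
  move=> [Ix [ax a'x]]; rewrite -(subrr (w x)).
  apply: is_derive1D (is_derive_parameterized_integral Ia Ix ax) _.
  exact: is_derive1N (is_derive_parameterized_integral Ia' Ix a'x).
have := is_derive_eq0_cst_on iJ dJ t c (conj It (conj at_ a't)).
by move=> /(_ (conj Ic (conj ac a'c))) /= h; lra.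
Qed.

Lemma exists_primitive {c} : I c ->
  exists G : R -> R, G c = 0 /\ forall t, I t -> is_derive t 1 G (w t).
Proof.
(* [I] may be unbounded below, so every [t] integrates from its own base
   point below [t] and [c]; by [parameterized_integralB_indep] the choice is
   immaterial. *)
move=> Ic; pose base t := xget c [set a | I a /\ a < t /\ a < c].
exists (fun t => F (base t) t - F (base t) c); split; first exact: subrr.
move=> t It.
have Imin : I (Order.min t c) by rewrite /Order.min; case: ifP.
have [a Ia] := open_exists_lt oI Imin; rewrite lt_min => /andP[at_ ac].
apply: (near_eq_is_derive (f := fun s => F a s - F a c)).
  near=> s.
  have Is : I s by near: s; exact: open_nbhs_nbhs.
  have as_ : a < s by near: s; exact: lt_nbhsr.
  have [Ib [bs bc]] : I (base s) /\ base s < s /\ base s < c.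
    by apply: (@xgetPex _ c [set a | I a /\ a < s /\ a < c]); exists a.
  exact: parameterized_integralB_indep Ia Ib Is Ic as_ ac bs bc.
apply: is_derive_eq (is_derive1D (is_derive_parameterized_integral Ia It at_)
  (is_derive1N (is_derive_cst _ _ _))) _.
by rewrite oppr0 addr0.
Unshelve. all: by end_near. Qed.

End Primitive.

End IntervalCalculus.

Section CircleLift.
Context {R : realType}.

Lemma exists_angle {a b : R} : a ^+ 2 + b ^+ 2 = 1 ->
  exists x, cos x = a /\ sin x = b.
Proof.
move=> ab1; have a2 : a ^+ 2 <= 1 by rewrite -ab1 lerDl sqr_ge0.
have a1 : -1 <= a <= 1 by apply/andP; split; nra.
have acosa : cos (acos a) = a by apply: acosK; rewrite in_itv.
have sacosa : sin (acos a) = `|b|.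
  by rewrite sin_acos // -ab1 addrAC subrr add0r sqrtr_sqr.
have [b0|b0] := leP 0 b.
  by exists (acos a); rewrite acosa sacosa ger0_norm.
by exists (- acos a); rewrite cosN sinN acosa sacosa ltr0_norm ?opprK.
Qed.

Lemma circle_lift (I : set R) (u v du dv w : R -> R) c :
  open I -> is_interval I -> I c ->
  (forall t, I t -> is_derive t 1 u (du t)) ->
  (forall t, I t -> is_derive t 1 v (dv t)) ->
  (forall t, I t -> u t ^+ 2 + v t ^+ 2 = 1) ->
  (forall t, I t -> w t = u t * dv t - v t * du t) ->
  (forall t, I t -> {for t, continuous w}) ->
  exists th, forall t, I t ->
    [/\ is_derive t 1 th (w t), cos (th t) = u t & sin (th t) = v t].
Proof.
move=> oI iI Ic udu vdv uv1 wE wc.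
have [th0 [cth0 sth0]] := exists_angle (uv1 c Ic).
have [G [G0 Gw]] := exists_primitive oI iI wc Ic.
pose th t := th0 + G t.
have thw t : I t -> is_derive t 1 th (w t).
  move=> It; apply: is_derive_eq (is_derive1D (is_derive_cst th0 t 1) (Gw t It)) _.
  exact: add0r.
have uvd t : I t -> u t * du t + v t * dv t = 0.
  move=> It; have one : is_derive t 1 (fun s => u s * u s + v s * v s) 0.
    apply: (near_eq_is_derive (f := fun=> (1 : R))).
    by near=> s; rewrite -!expr2 uv1 //; near: s; exact: open_nbhs_nbhs.
  have := is_derive1_unique (is_derive1D (is_derive1M (udu t It) (udu t It))
    (is_derive1M (vdv t It) (vdv t It))) one.
  by move=> h; lra.
pose h t := u t * cos (th t) + v t * sin (th t).
have h1 t : I t -> h t = 1.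
  move=> It; have -> : h t = h c.
    apply: (is_derive_eq0_cst_on iI) => // s Is; apply: is_derive_eq (is_derive1D
      (is_derive1M (udu s Is) (is_derive1_cos (thw s Is)))
      (is_derive1M (vdv s Is) (is_derive1_sin (thw s Is)))) _.
    rewrite wE //; transitivity ((u s * du s + v s * dv s) * h s +
      (1 - (u s ^+ 2 + v s ^+ 2)) * (du s * cos (th s) + dv s * sin (th s))).
      by rewrite /h; ring.
    by rewrite uvd // uv1 // subrr; ring.
  by rewrite /h /th G0 addr0 cth0 sth0 -!expr2 uv1.
exists th => t It.
have : (u t - cos (th t)) ^+ 2 + (v t - sin (th t)) ^+ 2 = 0.
  transitivity ((u t ^+ 2 + v t ^+ 2) + (cos (th t) ^+ 2 + sin (th t) ^+ 2)
    - 2 * h t); first by rewrite /h; ring.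
  by rewrite uv1 // cos2Dsin2 h1 //; ring.
move/eqP; rewrite paddr_eq0 ?sqr_ge0 // !sqrf_eq0 !subr_eq0.
move=> /andP[/eqP-> /eqP->].
by split=> //; exact: thw t It.
Unshelve. all: by end_near. Qed.

End CircleLift.

Section RotationMatrix.
Context {R : realType}.

Definition rot_cos_mx : 'M[R]_4 :=
  \matrix_(i < 4, j < 4)
    match nat_of_ord i, nat_of_ord j with 1, 1 | 3, 3 => 1 | _, _ => 0 end.

Definition rot_sin_mx : 'M[R]_4 :=
  \matrix_(i < 4, j < 4)
    match nat_of_ord i, nat_of_ord j with 1, 3 => 1 | 3, 1 => -1 | _, _ => 0 end.

Definition rot_fix_mx : 'M[R]_4 :=
  \matrix_(i < 4, j < 4)
    match nat_of_ord i, nat_of_ord j with 0, 0 | 2, 2 => 1 | _, _ => 0 end.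

Lemma G_mx11E (x : R) i j :
  G_mx 1 1 x i j =
  cos x * rot_cos_mx i j + sin x * rot_sin_mx i j + rot_fix_mx i j.
Proof.
by case: i j => [[|[|[|[|//]]]] ?] [[|[|[|[|//]]]] ?]; rewrite !mxE /=; ring.
Qed.

Lemma G_mx11_orthogonal (x : R) : G_mx 1 1 x *m (G_mx 1 1 x)^T = 1%:M.
Proof.
apply/matrixP => -[[|[|[|[|//]]]] ?] [[|[|[|[|//]]]] ?];
  rewrite !mxE !big_ord_recl !big_ord0 !mxE /=; try ring.
all: by rewrite -[RHS](cos2Dsin2 x); ring.
Qed.

Lemma G_mx11_row0 (x : R) (M : 'M[R]_4) :
  row ord0 (G_mx 1 1 x *m M) = row ord0 M.
Proof.
by apply/rowP => j; rewrite !mxE !big_ord_recl !big_ord0 !mxE /=; ring.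
Qed.

(* With [C = G B] and [B' = X_B B], [C' = (G' + G X_B) B]: this identity turns
   it into [C' = X_C C]. *)
Lemma G_mx11_gauge (x dx rho b : R) :
  dx *: (- sin x *: rot_cos_mx + cos x *: rot_sin_mx) +
    G_mx 1 1 x *m bishop_mx (rho * cos x) b (rho * sin x) =
  cframe_mx rho b dx *m G_mx 1 1 x.
Proof.
apply/matrixP => -[[|[|[|[|//]]]] ?] [[|[|[|[|//]]]] ?];
  rewrite !mxE !big_ord_recl !big_ord0 !mxE /=; try ring.
all: by rewrite -[rho in RHS]mulr1 -(cos2Dsin2 x); ring.
Qed.

End RotationMatrix.

Section MatrixCalculus.
Context {R : realType} {I : set R}.

Definition mx_is_derive_on {m n} (M dM : R -> 'M[R]_(m, n)) :=
  forall t, I t -> forall i j, is_derive t 1 (fun s => M s i j) (dM t i j).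

Lemma coeff_mxE (Z X : R -> 'M[R]_4) :
  coeff_mx I Z X <-> mx_is_derive_on Z (fun t => X t *m Z t).
Proof. by split=> ZX t It i j; apply/is_derive1P; exact: ZX. Qed.

Lemma mx_is_derive_on_mul {m n p}
    {M dM : R -> 'M[R]_(m, n)} {N dN : R -> 'M[R]_(n, p)} :
  mx_is_derive_on M dM -> mx_is_derive_on N dN ->
  mx_is_derive_on (fun t => M t *m N t) (fun t => dM t *m N t + M t *m dN t).
Proof.
move=> MdM NdN t It i j.
have -> : (fun s => (M s *m N s) i j) = (fun s => \sum_k M s i k * N s k j).
  by apply/funext => s; rewrite mxE.
apply: is_derive_eq
  (is_derive1_sum (fun k => is_derive1M (MdM t It i k) (NdN t It k j))) _.
by rewrite !mxE -big_split; apply: eq_bigr => k _.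
Qed.

Lemma mx_is_derive_on_G_mx11 {th dth : R -> R} :
  (forall t, I t -> is_derive t 1 th (dth t)) ->
  mx_is_derive_on (fun t => G_mx 1 1 (th t))
    (fun t => dth t *: (- sin (th t) *: rot_cos_mx + cos (th t) *: rot_sin_mx)).
Proof.
move=> thd t It i j.
have -> : (fun s => G_mx 1 1 (th s) i j) = (fun s => cos (th s) * rot_cos_mx i j
    + sin (th s) * rot_sin_mx i j + rot_fix_mx i j).
  by apply/funext => s; rewrite G_mx11E.
have cst (k : R) : is_derive t 1 (fun=> k) 0 := is_derive_cst k t 1.
apply: is_derive_eq (is_derive1D (is_derive1D
  (is_derive1M (is_derive1_cos (thd t It)) (cst _))
  (is_derive1M (is_derive1_sin (thd t It)) (cst _))) (cst _)) _.
by rewrite !mxE; ring.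
Qed.

Hypothesis oI : open I.

Lemma smooth_on_mulmx {m n p} (M : R -> 'M[R]_(m, n)) (N : R -> 'M[R]_(n, p)) :
  (forall i k, smooth_on I (fun t => M t i k)) ->
  (forall k j, smooth_on I (fun t => N t k j)) ->
  forall i j, smooth_on I (fun t => (M t *m N t) i j).
Proof.
move=> Ms Ns i j.
have -> : (fun t => (M t *m N t) i j) = (fun t => \sum_k M t i k * N t k j).
  by apply/funext => t; rewrite mxE.
by apply: (smooth_on_sum oI) => k; apply: (smooth_onM oI); [exact: Ms | exact: Ns].
Qed.

Lemma coeff_mx_smooth {Z X : R -> 'M[R]_4} :
  (forall i j, smooth_on I (fun t => Z t i j)) ->
  (forall t, I t -> Z t *m (Z t)^T = 1%:M) ->
  coeff_mx I Z X -> forall i j, smooth_on I (fun t => X t i j).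
Proof.
move=> Zs Zorth ZX i j.
pose dZ t := \matrix_(i, k) derive1 (fun s => Z s i k) t.
have dZE t : I t -> dZ t = X t *m Z t.
  by move=> It; apply/matrixP => i' k; rewrite mxE; case: (ZX t It i' k).
have dZs i' k : smooth_on I (fun t => dZ t i' k).
  have := smooth_on_derive1 (Zs i' k).
  by apply: (smooth_on_eq_on oI) => t _; rewrite mxE.
have ZTs k j' : smooth_on I (fun t => (Z t)^T k j').
  by apply: (smooth_on_eq_on oI _ (Zs j' k)) => t _; rewrite mxE.
have := smooth_on_mulmx dZ (fun t => (Z t)^T) dZs ZTs i j.
by apply: (smooth_on_eq_on oI) => t It; rewrite dZE // -mulmxA Zorth // mulmx1.
Qed.

End MatrixCalculus.

Section BishopRotation.
Context {R : realType} {I : set R} (oI : open I) (iI : is_interval I).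
Context {b1 b2 b3 : R -> R} {B : R -> 'M[R]_4}.
Hypothesis Bs : forall i j, smooth_on I (fun t => B t i j).
Hypothesis Borth : forall t, I t -> B t *m (B t)^T = 1%:M.
Hypothesis BX : coeff_mx I B (fun t => bishop_mx (b1 t) (b2 t) (b3 t)).
Hypothesis b13 : forall t, I t -> b1 t != 0 \/ b3 t != 0.

(* [rho], [b2] and [w] are the coefficients c1, c2, c3 of the new frame, and
   [(u, v)] is the unit vector [(b1, b3) / rho]. *)
Let rho (t : R) : R := Num.sqrt (b1 t ^+ 2 + b3 t ^+ 2).
Let w (t : R) : R :=
  (derive1 b3 t * b1 t - b3 t * derive1 b1 t) / (b1 t ^+ 2 + b3 t ^+ 2).
Let u (t : R) : R := b1 t / rho t.
Let v (t : R) : R := b3 t / rho t.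

Lemma b13_sqr_gt0 {t} : I t -> 0 < b1 t ^+ 2 + b3 t ^+ 2.
Proof.
move=> It; have [b10|b30] := b13 t It.
  by rewrite ltr_pwDl ?sqr_ge0 // exprn_even_gt0.
by rewrite ltr_pwDr ?sqr_ge0 // exprn_even_gt0.
Qed.

Lemma rho_gt0 {t} : I t -> 0 < rho t.
Proof. by move=> It; rewrite sqrtr_gt0 b13_sqr_gt0. Qed.

Lemma b1_smooth : smooth_on I b1.
Proof.
apply: (smooth_on_eq_on oI _ (coeff_mx_smooth oI Bs Borth BX ord0 (inord 1))).
by move=> t _; rewrite mxE inordK.
Qed.

Lemma b3_smooth : smooth_on I b3.
Proof.
apply: (smooth_on_eq_on oI _ (coeff_mx_smooth oI Bs Borth BX ord0 (inord 3))).
by move=> t _; rewrite mxE inordK.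
Qed.

Lemma rho_derivable {t} : I t -> derivable rho t 1.
Proof.
move=> It; have d1 := is_derive1_derive (smooth_on_derivable b1_smooth It).
have d3 := is_derive1_derive (smooth_on_derivable b3_smooth It).
pose q s := b1 s * b1 s + b3 s * b3 s.
have q0 : 0 < q t by rewrite /q -!expr2 b13_sqr_gt0.
have -> : rho = Num.sqrt \o q.
  by apply/funext => s /=; rewrite /rho /q !expr2.
by case: (@is_derive1_comp _ _ q t _ _ (is_derive1_sqrt q0)
  (is_derive1D (is_derive1M d1 d1) (is_derive1M d3 d3))).
Qed.

Lemma polar_derivable {t} : I t -> derivable u t 1 /\ derivable v t 1.
Proof.
move=> It; have rV := derivableV (lt0r_neq0 (rho_gt0 It)) (rho_derivable It).
split; first exact: derivableM (smooth_on_derivable b1_smooth It) rV.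
exact: derivableM (smooth_on_derivable b3_smooth It) rV.
Qed.

Lemma polar_sqr {t} : I t -> u t ^+ 2 + v t ^+ 2 = 1.
Proof.
move=> It; rewrite !expr_div_n -mulrDl sqr_sqrtr ?divff //.
  exact/lt0r_neq0/b13_sqr_gt0.
exact/ltW/b13_sqr_gt0.
Qed.

Lemma rho_polar {t} : I t -> rho t * u t = b1 t /\ rho t * v t = b3 t.
Proof. by move=> It; rewrite !(mulrC (rho t)) !divfK // lt0r_neq0 // rho_gt0. Qed.

Lemma w_polar {t} : I t -> w t = u t * derive1 v t - v t * derive1 u t.
Proof.
(* Differentiating [b1 = rho u] and [b3 = rho v], the [rho'] terms cancel in
   [b3' b1 - b3 b1']. *)
move=> It; have [du dv] := polar_derivable It.
have dr := is_derive1_derive (rho_derivable It).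
have b1' : derive1 b1 t = derive1 rho t * u t + rho t * derive1 u t.
  apply: is_derive1_unique (is_derive1_derive (smooth_on_derivable b1_smooth It)) _.
  apply: (near_eq_is_derive _ (is_derive1M dr (is_derive1_derive du))).
  by near=> s; apply: (rho_polar _).1; near: s; exact: open_nbhs_nbhs.
have b3' : derive1 b3 t = derive1 rho t * v t + rho t * derive1 v t.
  apply: is_derive1_unique (is_derive1_derive (smooth_on_derivable b3_smooth It)) _.
  apply: (near_eq_is_derive _ (is_derive1M dr (is_derive1_derive dv))).
  by near=> s; apply: (rho_polar _).2; near: s; exact: open_nbhs_nbhs.
have rho2 : b1 t ^+ 2 + b3 t ^+ 2 = rho t ^+ 2.
  by rewrite sqr_sqrtr // ltW // b13_sqr_gt0.
have [ru rv] := rho_polar It.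
rewrite /w rho2 b1' b3' -ru -rv; field.
exact/lt0r_neq0/rho_gt0.
Unshelve. all: by end_near. Qed.

Lemma w_smooth : smooth_on I w.
Proof.
have b1s := b1_smooth; have b3s := b3_smooth.
apply: (smooth_onM oI).
  apply: (smooth_onD oI); first exact: (smooth_onM oI (smooth_on_derive1 b3s) b1s).
  exact: (smooth_onN oI (smooth_onM oI b3s (smooth_on_derive1 b1s))).
apply: (smooth_onV oI) => [t It|]; first exact/lt0r_neq0/b13_sqr_gt0.
have := smooth_onD oI (smooth_onM oI b1s b1s) (smooth_onM oI b3s b3s).
by apply: (smooth_on_eq_on oI) => t _; rewrite !expr2.
Qed.

Lemma bishop_angle {c} : I c -> exists th, forall t, I t ->
  [/\ is_derive t 1 th (w t),
       rho t * cos (th t) = b1 t & rho t * sin (th t) = b3 t].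
Proof.
move=> Ic.
have udu t : I t -> is_derive t 1 u (derive1 u t).
  by move=> It; apply: is_derive1_derive; case: (polar_derivable It).
have vdv t : I t -> is_derive t 1 v (derive1 v t).
  by move=> It; apply: is_derive1_derive; case: (polar_derivable It).
have wc t : I t -> {for t, continuous w}.
  move=> It; apply/differentiable_continuous/derivable1_diffP.
  exact: smooth_on_derivable w_smooth It.
have [th thP] := circle_lift I u v _ _ w c oI iI Ic udu vdv
  (fun t It => polar_sqr It) (fun t It => w_polar It) wc.
exists th => t It; have [thw -> ->] := thP t It.
by have [-> ->] := rho_polar It.
Qed.

Section RotatedFrame.
Context {th : R -> R}.
Hypothesis thP : forall t, I t ->
  [/\ is_derive t 1 th (w t),
       rho t * cos (th t) = b1 t & rho t * sin (th t) = b3 t].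

Let th_w t : I t -> is_derive t 1 th (w t).
Proof. by case/thP. Qed.

Let C t := G_mx 1 1 (th t) *m B t.

Lemma rotated_frame_smooth i j : smooth_on I (fun t => C t i j).
Proof.
have ths : smooth_on I th := smooth_on_is_derive oI th_w w_smooth.
apply: (smooth_on_mulmx oI (fun t => G_mx 1 1 (th t)) B _ Bs) => i' k.
have -> : (fun t => G_mx 1 1 (th t) i' k) = (fun t => cos (th t) * rot_cos_mx i' k
    + sin (th t) * rot_sin_mx i' k + rot_fix_mx i' k).
  by apply/funext => t; rewrite G_mx11E.
have cst (a : R) := smooth_on_cst oI a.
exact: (smooth_onD oI (smooth_onD oI
  (smooth_onM oI (smooth_on_cos oI ths) (cst _))
  (smooth_onM oI (smooth_on_sin oI ths) (cst _))) (cst _)).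
Qed.

Lemma rotated_frame_orthogonal t : I t -> C t *m (C t)^T = 1%:M.
Proof.
move=> It; rewrite /C trmx_mul mulmxA -(mulmxA _ (B t)) Borth //.
by rewrite mulmx1 G_mx11_orthogonal.
Qed.

Lemma rotated_frame_coeff :
  coeff_mx I C (fun t => cframe_mx (rho t) (b2 t) (w t)).
Proof.
apply/coeff_mxE => t It i j.
have BdB := proj1 (coeff_mxE B _) BX.
apply: is_derive_eq
  (mx_is_derive_on_mul (mx_is_derive_on_G_mx11 th_w) BdB t It i j) _.
have [_ <- <-] := thP t It.
by rewrite mulmxA -mulmxDl G_mx11_gauge -mulmxA.
Qed.

Lemma rotated_frame_transition t : I t -> C t *m invmx (B t) = G_mx 1 1 (th t).
Proof.
by move=> It; rewrite /C mulmxK //; case: (mulmx1_unit (Borth t It)).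
Qed.

End RotatedFrame.

End BishopRotation.

Theorem lemma2 (R : realType) (I : set R) (b1 b2 b3 : R -> R)
    (g : R -> 'rV[R]_4) (B : R -> 'M[R]_4) :
  open I -> is_interval I -> I !=set0 ->
  curve_smooth I g -> arclength_param I g ->
  is_frame I g B ->
  coeff_mx I B (fun t => bishop_mx (b1 t) (b2 t) (b3 t)) ->
  (forall t, I t -> b1 t != 0 \/ b3 t != 0) ->
  exists (C : R -> 'M[R]_4) (c1 c2 c3 th : R -> R) (s1 s3 sth e1 e2 : R),
    [/\ is_sign s1, is_sign s3, is_sign sth, is_sign e1 & is_sign e2] /\
    is_frame I g C /\
    coeff_mx I C (fun t => cframe_mx (c1 t) (c2 t) (c3 t)) /\
    (forall t, I t ->
      [/\ c1 t = s1 * Num.sqrt (b1 t ^+ 2 + b3 t ^+ 2),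
          c2 t = b2 t,
          c3 t = s3 * ((derive1 b3 t * b1 t - b3 t * derive1 b1 t)
                        / (b1 t ^+ 2 + b3 t ^+ 2)) &
          C t *m invmx (B t) = G_mx e1 e2 (th t)] /\
      derivable th t 1 /\
      derive1 th t = sth * ((derive1 b3 t * b1 t - b3 t * derive1 b1 t)
                        / (b1 t ^+ 2 + b3 t ^+ 2))).
Proof.
move=> oI iI [c Ic] _ _ [Bs Bframe] BX b13.
have Borth t : I t -> B t *m (B t)^T = 1%:M by move=> It; case: (Bframe t It).
have [th thP] := bishop_angle oI iI Bs Borth BX b13 Ic.
exists (fun t => G_mx 1 1 (th t) *m B t),
  (fun t => Num.sqrt (b1 t ^+ 2 + b3 t ^+ 2)), b2,
  (fun t => (derive1 b3 t * b1 t - b3 t * derive1 b1 t) / (b1 t ^+ 2 + b3 t ^+ 2)),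
  th, 1, 1, 1, 1, 1.
split; first by split; left.
split.
  split; first exact: (rotated_frame_smooth oI Bs Borth BX b13 thP).
  move=> t It; split; first exact: (rotated_frame_orthogonal Borth t It).
  by rewrite G_mx11_row0; case: (Bframe t It).
split; first exact: (rotated_frame_coeff BX thP).
move=> t It; rewrite !mul1r; split.
  by split=> //; exact: (rotated_frame_transition Borth t It).
by apply/is_derive1P; case: (thP t It).
Qed.
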